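(* Let $G$ be a group with subgroups $H,G_1,G_2$ such that $H\le G_1$ and $H\le G_2$, and suppose there is $t\in G$ with $t^{-1}G_1t=G_2$ and $t^{-1}ht=h$ for all $h\in H$. Then for each $k\ge 1$ the map $H_k(G_1,H)\to H_k(G,G_2)$ induced by the inclusion equals the composite $$H_k(G_1,H)\xrightarrow{\ \partial\ }H_{k-1}(H)\xrightarrow{(-1)^k(\,\_\,\times t)}H_k(G,G_2),$$ where $\partial$ is the connecting homomorphism and $\_\times t$ is induced by the chain map $C_{k-1}(H)\to C_k(G)$ sending a bar chain $(h_1,\dots,h_{k-1})$ to $$\sum_{j=0}^{k-1}(-1)^{k-1-j}\,(h_1,\dots,h_j,t,h_{j+1},\dots,h_{k-1}),$$ followed by the projection to relative homology.
   Context: Group homology is computed with integer coefficients via the bar construction: $C_k(G)$ is the free abelian group on $k$-tuples $(g_1,\dots,g_k)$ of elements of $G$ with the usual bar differential; relative homology $H_*(G,K)$ for $K\le G$ is the homology of $C_*(G)/C_*(K)$. *)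

From HB Require Import structures.
From mathcomp Require Import all_boot all_order all_algebra.
Set Implicit Arguments. Unset Strict Implicit. Unset Printing Implicit Defensive.
Import GRing.Theory Num.Theory.
Local Open Scope ring_scope.

Section BarComplex.
Variable G : groupType.

(* An integral chain of the bar complex: a finite formal Z-linear combination
   of tuples (g_1,...,g_n) of elements of G, given as a list of
   (coefficient, tuple) pairs.  Two lists represent the same element of the
   free abelian group iff all their coefficients agree ([ceq]). *)
Definition chain := seq (int * seq G).

Definition coef (c : chain) (sigma : seq G) : int :=
  \sum_(p <- c | p.2 == sigma) p.1.

Definition ceq (c d : chain) : Prop := forall sigma, coef c sigma = coef d sigma.

Definition cadd (c d : chain) : chain := c ++ d.
Definition cscale (a : int) (c : chain) : chain := [seq (a * p.1, p.2) | p <- c].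
Definition csub (c d : chain) : chain := cadd c (cscale (-1) d).

Definition of_degree (k : nat) (c : chain) : Prop :=
  forall sigma, coef c sigma != 0 -> size sigma = k.

Definition supported_in (K : {pred G}) (c : chain) : Prop :=
  forall sigma, coef c sigma != 0 -> all (mem K) sigma.

(* the bar differential of a basis element (g_1,...,g_n):
   (g_2,...,g_n) + sum_{i=1}^{n-1} (-1)^i (..., g_i g_{i+1}, ...)
   + (-1)^n (g_1,...,g_{n-1});  the differential of () is 0 *)
Definition bar_bd_tuple (s : seq G) : chain :=
  match s with
  | [::] => [::]
  | _ :: s' =>
    let n := size s in
    (1, s') ::
    [seq ((-1) ^+ i.+1, take i s ++ (nth 1%g s i * nth 1%g s i.+1)%g :: drop i.+2 s)
       | i <- iota 0 n.-1]
    ++ [:: ((-1) ^+ n, take n.-1 s)]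
  end.

Definition bar_bd (c : chain) : chain :=
  flatten [seq cscale p.1 (bar_bd_tuple p.2) | p <- c].

Definition cross_t_tuple (t : G) (s : seq G) : chain :=
  [seq ((-1) ^+ (size s - j), take j s ++ t :: drop j s) | j <- iota 0 (size s).+1].

Definition cross_t (t : G) (c : chain) : chain :=
  flatten [seq cscale p.1 (cross_t_tuple t p.2) | p <- c].

Definition rel_cycle (K A : {pred G}) (k : nat) (z : chain) : Prop :=
  [/\ of_degree k z, supported_in K z & supported_in A (bar_bd z)].

Definition rel_homologous (K A : {pred G}) (k : nat) (z1 z2 : chain) : Prop :=
  exists w u, [/\ of_degree k.+1 w, supported_in K w, of_degree k u,
                  supported_in A u & ceq (csub z1 z2) (cadd (bar_bd w) u)].

(* the connecting homomorphism H_k(K,A) -> H_{k-1}(A) on representatives: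
   lift the relative cycle to z in C_k(K) and take its boundary *)
Definition connecting (z : chain) : chain := bar_bd z.

End BarComplex.

(* The prism
   operator h (g_1,...,g_m) = sum_j (-1)^j (g_1,...,g_j, t, g_(j+1)^t,...,g_m^t)
   is a chain homotopy from the identity to conjugation c_t, i.e.
   d h + h d = c_t - 1, which is an alternating-sum consequence of the
   simplicial identities between faces and insertions of t.  On chains of
   degree m with entries in H, h coincides with (-1)^m (_ x t).  Hence for a
   relative cycle z of (G1, H) of degree k,
     z - (-1)^k (dz x t) = z + h dz = c_t z - d (h z),
   where c_t z lies in C_k(G2) and d (h z) is a boundary. *)

From HB Require Import structures.
From mathcomp Require Import all_boot all_order all_algebra.
From mathcomp Require Import zify ring.
Import GRing.Theory Num.Theory.
Local Open Scope ring_scope.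
Set Implicit Arguments. Unset Strict Implicit. Unset Printing Implicit Defensive.

Section ChainAlgebra.
Variable G : groupType.
Implicit Types (c d : chain G) (s tau : seq G) (Phi : seq G -> int).

(* Chains are handled through their pairings with integer cochains Phi;
   by [ceqP] these pairings determine a chain up to [ceq]. *)
Definition ceval c Phi : int := \sum_(p <- c) p.1 * Phi p.2.

Definition lin_ext (F : seq G -> chain G) c : chain G :=
  flatten [seq cscale p.1 (F p.2) | p <- c].

Lemma ceval_cat c d Phi : ceval (cadd c d) Phi = ceval c Phi + ceval d Phi.
Proof. exact: big_cat. Qed.

Lemma ceval_cscale a c Phi : ceval (cscale a c) Phi = a * ceval c Phi.
Proof. by rewrite /ceval big_map mulr_sumr; apply: eq_bigr => p _; rewrite mulrA. Qed.

Lemma ceval_seq1 a s Phi : ceval [:: (a, s)] Phi = a * Phi s.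
Proof. exact: big_seq1. Qed.

Lemma ceval_iota (a : nat -> int) (f : nat -> seq G) n Phi :
  ceval [seq (a i, f i) | i <- iota 0 n] Phi = \sum_(i < n) a i * Phi (f i).
Proof.
by rewrite /ceval big_map -(big_mkord xpredT (fun i => a i * Phi (f i))) /index_iota subn0.
Qed.

Lemma cevalZ c a Phi : ceval c (fun s => a * Phi s) = a * ceval c Phi.
Proof. by rewrite /ceval mulr_sumr; apply: eq_bigr => p _; rewrite mulrCA. Qed.

Lemma ceval_lin_ext F c Phi :
  ceval (lin_ext F c) Phi = ceval c (fun tau => ceval (F tau) Phi).
Proof.
elim: c => [|p c IHc]; first by rewrite /ceval !big_nil.
by rewrite /lin_ext /= -/(lin_ext F c) ceval_cat ceval_cscale IHc /ceval big_cons.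
Qed.

Lemma bar_bdE c : bar_bd c = lin_ext (@bar_bd_tuple G) c.
Proof. by []. Qed.

Lemma ceval_bar_bd_cscale a c Phi :
  ceval (bar_bd (cscale a c)) Phi = a * ceval (bar_bd c) Phi.
Proof. by rewrite !bar_bdE !ceval_lin_ext ceval_cscale. Qed.

Lemma coef_ceval c s : coef c s = ceval c (fun tau => (tau == s)%:R).
Proof.
rewrite /coef /ceval big_mkcond; apply: eq_bigr => p _.
by case: eqP; rewrite ?mulr1 ?mulr0.
Qed.

Lemma coef_cscale a c s : coef (cscale a c) s = a * coef c s.
Proof. by rewrite !coef_ceval ceval_cscale. Qed.

Lemma ceval_coef c Phi (r : seq (seq G)) : uniq r -> {subset map snd c <= r} ->
  ceval c Phi = \sum_(tau <- r) coef c tau * Phi tau.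
Proof.
move=> r_uniq cr; under eq_bigr => tau _ do
  rewrite coef_ceval /ceval mulr_suml.
rewrite exchange_big; apply: eq_big_seq => p pc.
rewrite (bigD1_seq p.2) ?cr ?map_f //= eqxx mulr1 big1 ?addr0 // => tau.
by rewrite eq_sym => /negPf->; rewrite mulr0 mul0r.
Qed.

Lemma ceval_coef_undup c Phi :
  ceval c Phi = \sum_(tau <- undup (map snd c)) coef c tau * Phi tau.
Proof. by apply: ceval_coef (undup_uniq _) _ => tau; rewrite mem_undup. Qed.

Lemma eq_ceval_supp c Phi1 Phi2 :
  (forall tau, coef c tau != 0 -> Phi1 tau = Phi2 tau) ->
  ceval c Phi1 = ceval c Phi2.
Proof.
move=> eqPhi; rewrite !ceval_coef_undup; apply: eq_bigr => tau _.
by have [->|/eqPhi->] := eqVneq (coef c tau) 0; rewrite ?mul0r.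
Qed.
Lemma ceqP c d : ceq c d <-> forall Phi, ceval c Phi = ceval d Phi.
Proof.
split=> [cd Phi | cd s]; last by rewrite !coef_ceval cd.
pose r := undup (map snd (c ++ d)).
have [sub_c sub_d] : {subset map snd c <= r} /\ {subset map snd d <= r}.
  by split=> tau; rewrite mem_undup map_cat mem_cat => ->; rewrite ?orbT.
rewrite (ceval_coef _ (undup_uniq _) sub_c) (ceval_coef _ (undup_uniq _) sub_d).
by apply: eq_bigr => tau _; rewrite cd.
Qed.

Lemma coef_lin_ext F c s :
  coef (lin_ext F c) s = ceval c (fun tau => coef (F tau) s).
Proof. by rewrite coef_ceval ceval_lin_ext; apply: eq_bigr => p _; rewrite coef_ceval. Qed.

Lemma coef_lin_ext_neq0 F c s : coef (lin_ext F c) s != 0 ->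
  exists2 tau, coef c tau != 0 & coef (F tau) s != 0.
Proof.
move=> nz; pose both tau := (coef c tau != 0) && (coef (F tau) s != 0).
have [/hasP[tau _ /andP[]]|/hasPn none] := boolP (has both (undup (map snd c))).
  by exists tau.
move: nz; rewrite coef_lin_ext ceval_coef_undup big1_seq ?eqxx // => tau /andP[_].
by move/none; rewrite negb_and !negbK => /orP[]/eqP->; rewrite ?mul0r ?mulr0.
Qed.

Lemma of_degree_cscale k a c : of_degree k c -> of_degree k (cscale a c).
Proof. by move=> ck s; rewrite coef_cscale mulf_eq0 negb_or => /andP[_ /ck]. Qed.

Lemma of_degree_seq k c : (forall p, p \in c -> size p.2 = k) -> of_degree k c.
Proof.
move=> ck s nz; have: s \in map snd c.
  apply: contraTT nz => /negPf s_notin; rewrite negbK /coef big1_seq // => p.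
  by case/andP=> /eqP ps pc; move: s_notin; rewrite -ps map_f.
by case/mapP=> p /ck <- ->.
Qed.

Lemma of_degree_lin_ext k m F c : of_degree k c ->
  (forall tau, size tau = k -> of_degree m (F tau)) -> of_degree m (lin_ext F c).
Proof. by move=> ck Fk s /coef_lin_ext_neq0[tau /ck/Fk]; apply. Qed.

Definition cmap (f : G -> G) c : chain G := lin_ext (fun s => [:: (1, map f s)]) c.

Lemma ceval_cmap f c Phi : ceval (cmap f c) Phi = ceval c (fun tau => Phi (map f tau)).
Proof. by rewrite ceval_lin_ext; apply: eq_bigr => p _; rewrite ceval_seq1 mul1r. Qed.

Lemma coef_cmap_neq0 f c s : coef (cmap f c) s != 0 ->
  exists2 tau, coef c tau != 0 & s = map f tau.
Proof.
case/coef_lin_ext_neq0=> tau ctau; rewrite coef_ceval ceval_seq1 mul1r.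
by rewrite pnatr_eq0 eqb0 negbK => /eqP<-; exists tau.
Qed.

Lemma of_degree_cmap k f c : of_degree k c -> of_degree k (cmap f c).
Proof. by move=> ck s /coef_cmap_neq0[tau /ck <- ->]; rewrite size_map. Qed.

Lemma supported_in_cmap (K A : {pred G}) f c :
  {in K, forall x, f x \in A} -> supported_in K c -> supported_in A (cmap f c).
Proof.
move=> fKA cK s /coef_cmap_neq0[tau /cK tauK ->]; rewrite all_map.
by apply/allP=> x /(allP tauK) /fKA.
Qed.

End ChainAlgebra.

Section FacesAndInsertions.
Variables (G : groupType) (t : G).
Implicit Types (s l : seq G).

(* The i-th face of the bar complex: drop the first entry (i = 0), multiply
   the entries at positions i - 1 and i, or drop the last entry (i = size l). *)
Definition face (i : nat) l : seq G :=
  mkseq (fun k => if (k.+1 < i)%N then nth 1%g l k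
                  else if k.+1 == i then (nth 1%g l k * nth 1%g l k.+1)%g
                  else nth 1%g l k.+1) (size l).-1.

(* Insert t at position j and conjugate the later entries by t; on entries
   fixed by t this is the insertion used by [cross_t_tuple]. *)
Definition tinsert (j : nat) s : seq G :=
  mkseq (fun k => if (k < j)%N then nth 1%g s k else if k == j then t
                  else (nth 1%g s k.-1 ^ t)%g) (size s).+1.

Lemma size_face i l : size (face i l) = (size l).-1.
Proof. exact: size_mkseq. Qed.

Lemma size_tinsert j s : size (tinsert j s) = (size s).+1.
Proof. exact: size_mkseq. Qed.

Let nth_mkseq_if (f : nat -> G) n k :
  nth 1%g (mkseq f n) k = if (k < n)%N then f k else 1%g.
Proof. by case: ltnP => kn; [rewrite nth_mkseq | rewrite nth_default ?size_mkseq]. Qed.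

Let nth_take_if l m k : nth 1%g (take m l) k = if (k < m)%N then nth 1%g l k else 1%g.
Proof.
case: ltnP => km; first exact: nth_take.
by rewrite nth_default // size_take_min; lia.
Qed.

Let nth_cons_if (x : G) l k : nth 1%g (x :: l) k = if k == 0%N then x else nth 1%g l k.-1.
Proof. by case: k. Qed.

Ltac seq_ext :=
  apply: (@eq_from_nth _ 1%g);
  [ rewrite !size_mkseq ?size_cat ?size_take_min /= ?size_map ?size_drop;
    repeat case: ifP => ?; lia
  | move=> k; rewrite ?size_mkseq /= => kn;
    rewrite ?nth_mkseq_if ?size_mkseq ?nth_cat ?nth_take_if ?size_take_min ?size_mkseq;
    rewrite /= ?nth_cons_if ?nth_drop;
    repeat (case: ifP => ?); try lia; try done;
    try congr (nth _ _ _); try congr (nth _ _ _ ^ _)%g;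
    try congr (nth _ _ _ * nth _ _ _)%g; try lia ].

Lemma face0 (g : G) l : face 0 (g :: l) = l.
Proof. seq_ext. Qed.

Lemma face_mul i l : (i.+1 < size l)%N ->
  face i.+1 l = take i l ++ (nth 1%g l i * nth 1%g l i.+1)%g :: drop i.+2 l.
Proof. move=> il; seq_ext. Qed.

Lemma face_last l : face (size l) l = take (size l).-1 l.
Proof. seq_ext. Qed.

Lemma tinsertE j s : (j <= size s)%N ->
  tinsert j s = take j s ++ t :: map (conjg^~ t) (drop j s).
Proof.
move=> js; seq_ext.
rewrite (nth_map 1%g) /= ?nth_drop ?size_drop; try lia.
congr (nth _ _ _ ^ _)%g; lia.
Qed.

Lemma face_tinsert_lt i j s : (i < j <= size s)%N ->
  face i (tinsert j s) = tinsert j.-1 (face i s).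
Proof. move=> ijs; seq_ext. Qed.

Lemma face_tinsert_gt i j s : (j.+1 < i <= (size s).+1)%N ->
  face i (tinsert j s) = tinsert j (face i.-1 s).
Proof.
move=> jis; seq_ext.
rewrite -conjMg; congr ((nth _ _ _ * nth _ _ _) ^ _)%g; lia.
Qed.

Lemma face_tinsert_succ j s : (j < size s)%N ->
  face j.+1 (tinsert j s) = face j.+1 (tinsert j.+1 s).
Proof. by move=> js; seq_ext; rewrite -conjgC. Qed.

Lemma face0_tinsert0 s : face 0 (tinsert 0 s) = map (conjg^~ t) s.
Proof. seq_ext; rewrite (nth_map 1%g) //; lia. Qed.

Lemma face_last_tinsert_last s : face (size s).+1 (tinsert (size s) s) = s.
Proof. seq_ext. Qed.

Lemma bar_bd_tupleE l : (0 < size l)%N ->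
  bar_bd_tuple l = [seq ((-1) ^+ i, face i l) | i <- iota 0 (size l).+1].
Proof.
case: l => [//|g l] _.
have -> : iota 0 (size (g :: l)).+1 =
    0%N :: [seq (1 + i)%N | i <- iota 0 (size l)] ++ [:: (size l).+1].
  by rewrite -(iotaDl 1 0) addn0 -addn1 iotaD add0n.
rewrite map_cons face0 expr0 map_cat -map_comp /=; congr (_ :: _ ++ [:: (_, _)]).

  apply/eq_in_map => i; rewrite mem_iota add0n => /andP[_ il] /=.
  by rewrite face_mul.
by rewrite -[(size l).+1]/(size (g :: l)) face_last.
Qed.

End FacesAndInsertions.

(* With x i j the i-th face of the j-th insertion and y i j the j-th insertion
   into the i-th face, the off-diagonal terms cancel in pairs and the diagonal
   terms telescope. *)
Lemma alternating_homotopy_sum (x y : nat -> nat -> int) n :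
  (forall i j, (i < j <= n)%N -> x i j = y i j.-1) ->
  (forall i j, (j.+1 < i <= n.+1)%N -> x i j = y i.-1 j) ->
  (forall j, (j < n)%N -> x j.+1 j = x j.+1 j.+1) ->
  \sum_(j < n.+1) (-1) ^+ j * \sum_(i < n.+2) (-1) ^+ i * x i j
  + \sum_(i < n.+1) (-1) ^+ i * \sum_(j < n) (-1) ^+ j * y i j
  = x 0%N 0%N - x n.+1 n.
Proof.
elim: n => [|n IHn] xy_lt xy_gt x_diag.
  by rewrite !big_ord_recr !big_ord0 /=; ring.
pose A := \sum_(j < n.+1) (-1) ^+ j * \sum_(i < n.+2) (-1) ^+ i * x i j.
pose B := \sum_(i < n.+1) (-1) ^+ i * \sum_(j < n) (-1) ^+ j * y i j.
have IH : A + B = x 0%N 0%N - x n.+1 n.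
  apply: IHn => [i j /andP[ij /leqW jn]|i j /andP[ji /leqW in_]|j /ltnW jn].
  - by apply: xy_lt; rewrite ij.
  - by apply: xy_gt; rewrite ji.
  - exact: x_diag.
pose P := \sum_(j < n.+1) (-1) ^+ j * y n.+1 j.
pose Q := \sum_(i < n.+1) (-1) ^+ i * y i n.
have splitA : \sum_(j < n.+2) (-1) ^+ j * \sum_(i < n.+3) (-1) ^+ i * x i j =
    A + (-1) ^+ n.+2 * P + (-1) ^+ n.+1 * (Q + (-1) ^+ n.+1 * x n.+1 n.+1
                                           + (-1) ^+ n.+2 * x n.+2 n.+1).
  rewrite big_ord_recr /=; congr (_ + _).
    rewrite /A /P mulr_sumr -big_split /=; apply: eq_bigr => j _.
    rewrite big_ord_recr /= mulrDr (xy_gt n.+2 j); first by rewrite mulrCA.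
    by rewrite ltnS ltn_ord leqnn.
  rewrite 2!big_ord_recr /= /Q; congr (_ * (_ + _ + _)).
  by apply: eq_bigr => i _; rewrite xy_lt // ltn_ord leqnn.
have splitB : \sum_(i < n.+2) (-1) ^+ i * \sum_(j < n.+1) (-1) ^+ j * y i j =
    B + (-1) ^+ n * Q + (-1) ^+ n.+1 * P.
  rewrite big_ord_recr /=; congr (_ + _).
  rewrite /B /Q mulr_sumr -big_split /=; apply: eq_bigr => i _.
  by rewrite big_ord_recr /= mulrDr mulrCA.
rewrite splitA splitB -x_diag // -[x 0%N 0%N](subrK (x n.+1 n)) -IH.
have sign_sq : ((-1) ^+ n * (-1) ^+ n : int) = 1 by rewrite -expr2 sqrr_sign.
rewrite !exprS; clearbody A B P Q; move: ((-1) ^+ n) sign_sq => e sign_sq.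
transitivity (A + B + e * e * (x n.+1 n - x n.+2 n.+1)); first ring.
by rewrite sign_sq mul1r; ring.
Qed.

Section Prism.
Variables (G : groupType) (t : G).
Implicit Types (s l tau : seq G) (c : chain G) (Phi : seq G -> int).

Definition prism s : chain G :=
  [seq ((-1) ^+ j, tinsert t j s) | j <- iota 0 (size s).+1].

Lemma cross_t_tupleE s : {in s, forall h, (h ^ t)%g = h} ->
  cross_t_tuple t s = cscale ((-1) ^+ size s) (prism s).
Proof.
move=> fix_s; rewrite /prism /cscale -map_comp; apply/eq_in_map => j.
rewrite mem_iota ltnS => /andP[_ js] /=.
rewrite tinsertE // map_id_in => [|h /mem_drop /fix_s //].
by rewrite -{2}(subnK js) exprD -mulrA -expr2 sqrr_sign mulr1.
Qed.

Lemma ceval_bar_bd_tuple l Phi : (0 < size l)%N ->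
  ceval (bar_bd_tuple l) Phi = \sum_(i < (size l).+1) (-1) ^+ i * Phi (face i l).
Proof. by move=> l_gt0; rewrite bar_bd_tupleE // ceval_iota. Qed.

Lemma ceval_prism s Phi :
  ceval (prism s) Phi = \sum_(j < (size s).+1) (-1) ^+ j * Phi (tinsert t j s).
Proof. exact: ceval_iota. Qed.

Lemma of_degree_bar_bd_tuple s : of_degree (size s).-1 (bar_bd_tuple s).
Proof.
case: s => [|g l]; first by move=> s; rewrite /coef big_nil eqxx.
rewrite bar_bd_tupleE //; apply: of_degree_seq => _ /mapP[i _ ->].
exact: size_face.
Qed.

Lemma of_degree_prism s : of_degree (size s).+1 (prism s).
Proof. by apply: of_degree_seq => _ /mapP[j _ ->]; apply: size_tinsert. Qed.

Lemma prism_homotopy_tuple tau Phi :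
  ceval (bar_bd (prism tau)) Phi + ceval (lin_ext prism (bar_bd_tuple tau)) Phi
  = Phi (map (conjg^~ t) tau) - Phi tau.
Proof.
rewrite bar_bdE !ceval_lin_ext ceval_prism.
under eq_bigr do rewrite ceval_bar_bd_tuple ?size_tinsert //.
have -> : ceval (bar_bd_tuple tau) (fun s => ceval (prism s) Phi) =
    \sum_(i < (size tau).+1) (-1) ^+ i *
      \sum_(j < size tau) (-1) ^+ j * Phi (tinsert t j (face i tau)).
  case: tau => [|g l]; first by rewrite /ceval !big_nil big1 // => i _; rewrite big_ord0 mulr0.
  rewrite ceval_bar_bd_tuple //; apply: eq_bigr => i _.
  by rewrite ceval_prism size_face.
rewrite (alternating_homotopy_sum (x := fun i j => Phi (face i (tinsert t j tau)))
                                  (y := fun i j => Phi (tinsert t j (face i tau)))).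
- by rewrite face0_tinsert0 face_last_tinsert_last.
- by move=> i j ijs; rewrite face_tinsert_lt.
- by move=> i j jis; rewrite face_tinsert_gt.
- by move=> j js; rewrite face_tinsert_succ.
Qed.

Lemma prism_homotopy c :
  ceq (cadd (bar_bd (lin_ext prism c)) (lin_ext prism (bar_bd c)))
      (csub (cmap (conjg^~ t) c) c).
Proof.
apply/ceqP => Phi; rewrite /csub !ceval_cat ceval_cscale ceval_cmap !bar_bdE.
rewrite !ceval_lin_ext /ceval mulr_sumr -!big_split; apply: eq_bigr => p _ /=.
move: (prism_homotopy_tuple p.2 Phi); rewrite bar_bdE !ceval_lin_ext /ceval => hp.
by rewrite -mulrDr hp mulrBr mulN1r.
Qed.

Lemma cross_t_prism (K : {pred G}) m c :
  {in K, forall h, (h ^ t)%g = h} -> of_degree m c -> supported_in K c ->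
  ceq (cross_t t c) (cscale ((-1) ^+ m) (lin_ext prism c)).
Proof.
move=> fixK c_deg c_K; apply/ceqP => Phi.
rewrite ceval_cscale ceval_lin_ext -cevalZ ceval_lin_ext.
apply: eq_ceval_supp => tau c_tau.
rewrite cross_t_tupleE ?ceval_cscale ?(c_deg _ c_tau) // => h /(allP (c_K _ c_tau)).
exact: fixK.
Qed.
End Prism.

Theorem lemma2p5 (G : groupType) (H G1 G2 : {pred G}) :
  group_closed H -> group_closed G1 -> group_closed G2 ->
  {subset H <= G1} -> {subset H <= G2} ->
  forall t : G,
  (forall x : G, x \in G2 <-> exists2 g, g \in G1 & x = (g ^ t)%g) ->
  (forall h : G, h \in H -> (h ^ t)%g = h) ->
  forall k : nat, (1 <= k)%N ->
  forall z : chain G, rel_cycle G1 H k z ->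
    rel_homologous (@predT G) G2 k z
      (cscale ((-1) ^+ k) (cross_t t (connecting z))).
Proof.
move=> _ _ _ _ _ t G2_conj H_fixed k k_gt0 z [z_deg z_G1 bdz_H].
have bdz_deg : of_degree k.-1 (bar_bd z).
  by apply: of_degree_lin_ext z_deg _ => tau <-; apply: of_degree_bar_bd_tuple.
exists (cscale (-1) (lin_ext (prism t) z)), (cmap (conjg^~ t) z); split.
- apply/of_degree_cscale/(of_degree_lin_ext z_deg) => tau <-.
  exact: of_degree_prism.
- by move=> s _; apply/allP.
- exact: of_degree_cmap.
- by apply: supported_in_cmap z_G1 => x x_G1; apply/G2_conj; exists x.
apply/ceqP => Phi; move/ceqP/(_ Phi): (prism_homotopy t z).
move/ceqP/(_ Phi): (cross_t_prism H_fixed bdz_deg bdz_H).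
rewrite /connecting /csub !ceval_cat !ceval_cscale ceval_bar_bd_cscale => ->.
have sign : (-1) ^+ k * (-1) ^+ k.-1 = -1 :> int.
  by case: (k) k_gt0 => // n _; rewrite exprS -mulrA -expr2 sqrr_sign mulr1.
by rewrite [(-1) ^+ k * _]mulrA sign; lia.
Qed.
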